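(* Let $f,h:\mathbb{R}^d\to\mathbb{R}$ be closed convex, $a,b,\eta>0$, $\delta=\sqrt{2\eta/(d+2)}$, $\widetilde Q=\{(x,s,t):h(x)\le as,\ f(x)+as\le bt\}$. Let $(y,u,v)\in\mathbb{R}^{d+2}$, $q=(y,u,v-b\eta)$, $p_{k-1}\in\widetilde Q$, $r_{\mathrm{loc}}=\|p_{k-1}-q\|$, $\widetilde Q_{\mathrm{loc}}=\widetilde Q\cap\{p:\|p-q\|\le2r_{\mathrm{loc}}\}$, and $\widetilde\Theta(p)=I_{\widetilde Q}(p)+\frac1{2\eta}\|p-q\|^2+bv-\frac{\eta b^2}2$. Let $\tilde p\in\widetilde Q_{\mathrm{loc}}$ satisfy $\widetilde\Theta(\tilde p)-\min_{\widetilde Q_{\mathrm{loc}}}\widetilde\Theta\le\frac1{d+2}$, and define $$\widetilde{\mathcal P}_1(p)=\frac{\|p-\tilde p\|^2+\|\tilde p-q\|^2}{2\eta}-\frac\delta\eta(\|p-\tilde p\|+\|\tilde p-q\|)+bv-\frac{b^2\eta}2-\frac{\delta^2}\eta.$$ Then $\widetilde{\mathcal P}_1(p)\le\widetilde\Theta(p)$ for all $p\in\mathbb{R}^{d+2}$.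
   Context: $I_{\widetilde Q}$ is $0$ on $\widetilde Q$ and $+\infty$ off it. *)

From HB Require Import structures.
From mathcomp Require Import all_boot all_order all_algebra.
From mathcomp Require Import all_classical all_reals all_analysis.
Set Implicit Arguments. Unset Strict Implicit. Unset Printing Implicit Defensive.
Import Order.TTheory GRing.Theory Num.Theory.
Import numFieldNormedType.Exports.
Local Open Scope ring_scope.
Local Open Scope classical_set_scope.

(* points of R^{d+2} written as triples (x, s, t), x : R^d *)
Definition pt (R : realType) (d : nat) := ('rV[R]_d * R * R)%type.

Definition sqnormv (R : realType) d (x : 'rV[R]_d) : R := \sum_(i < d) x ord0 i ^+ 2.

Definition dist2 (R : realType) d (p q : pt R d) : R :=
  sqnormv (p.1.1 - q.1.1) + (p.1.2 - q.1.2) ^+ 2 + (p.2 - q.2) ^+ 2.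
Definition dist (R : realType) d (p q : pt R d) : R := Num.sqrt (dist2 p q).

Definition convex_fun (R : realType) d (f : 'rV[R]_d -> R) : Prop :=
  forall (x y : 'rV[R]_d) (l : R), 0 <= l -> l <= 1 ->
    f (l *: x + (1 - l) *: y) <= l * f x + (1 - l) * f y.

Definition closed_fun (R : realType) d (f : 'rV[R]_d -> R) : Prop :=
  closed [set z : 'rV[R]_d * R | f z.1 <= z.2].

Definition Qt (R : realType) d (f h : 'rV[R]_d -> R) (a b : R) : set (pt R d) :=
  [set p | h p.1.1 <= a * p.1.2 /\ f p.1.1 + a * p.1.2 <= b * p.2].

Definition Theta (R : realType) d (f h : 'rV[R]_d -> R) (a b eta v : R) (q p : pt R d)
  : \bar R :=
  ((if `[< Qt f h a b p >] then 0%E else +oo%E)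
   + (dist2 p q / (2 * eta) + b * v - eta * b ^+ 2 / 2)%:E)%E.

Definition P1 (R : realType) d (b eta v delta : R) (q pt_ p : pt R d) : R :=
  (dist2 p pt_ + dist2 pt_ q) / (2 * eta)
  - delta / eta * (dist p pt_ + dist pt_ q)
  + b * v - b ^+ 2 * eta / 2 - delta ^+ 2 / eta.

From HB Require Import structures.
From mathcomp Require Import all_boot all_order all_algebra.
From mathcomp Require Import all_classical all_reals all_analysis.
From mathcomp Require Import ring lra.
Import Order.TTheory GRing.Theory Num.Theory.
Import numFieldNormedType.Exports.
Local Open Scope ring_scope.
Local Open Scope classical_set_scope.

Set Implicit Arguments.
Unset Strict Implicit.

(* For p in Q~, Theta~(p) - P~_1(p) = (delta |p - p~| + delta |p~ - q| + delta^2 - c) / eta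
   with c = <p - p~, q - p~>, so it suffices to show c <= delta |p - p~| + delta^2.
   Moving from p~ towards p by a fraction t of the way stays in Q~ (convexity) and
   lowers |. - q|^2 by 2 t c - t^2 |p - p~|^2; while this gain is nonnegative the point
   stays in Q~_loc, so near-minimality of p~ caps the gain by delta^2 = 2 eta / (d + 2).
   Taking t = min(1, delta / |p - p~|) yields the bound on c. *)

Lemma slope_le_of_bounded_gain (R : realFieldType) (A c delta : R) :
  0 <= A -> 0 < delta ->
  (forall t, 0 <= t <= 1 -> t ^+ 2 * A ^+ 2 <= 2 * t * c ->
     2 * t * c <= t ^+ 2 * A ^+ 2 + delta ^+ 2) ->
  c <= delta * A + delta ^+ 2.
Proof.
move=> A0 delta0 gain; rewrite leNgt; apply/negP => c_big.
have small_step t : 0 <= t <= 1 -> t * A <= delta -> t * c <= delta ^+ 2.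
  move=> t01 tA; have /andP[t0 _] := t01.
  have tA0 : 0 <= t * A by rewrite mulr_ge0.
  have cA : delta * A <= c by have := sqr_ge0 delta; lra.
  have tc : t * (delta * A) <= t * c by rewrite ler_wpM2l.
  have tA2 : (t * A) ^+ 2 <= delta * (t * A) by rewrite expr2 ler_wpM2r.
  have tA2' : (t * A) ^+ 2 <= delta ^+ 2 by rewrite ler_sqr ?nnegrE // ltW.
  have tdA0 : 0 <= t * (delta * A) by rewrite !mulr_ge0 // ltW.
  have descent : (t * A) ^+ 2 <= 2 * t * c by rewrite mulrCA in tA2; lra.
  by have := gain t t01; rewrite -exprMn => /(_ descent); lra.
have [A_le | A_gt] := leP A delta.
  have := small_step 1; rewrite ler01 lexx mul1r => /(_ isT A_le).
  have := mulr_ge0 (ltW delta0) A0; lra.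
have A_pos : 0 < A by exact: lt_trans A_gt.
have t01 : 0 <= delta / A <= 1.
  apply/andP; split; first by rewrite divr_ge0 // ltW.
  by rewrite ler_pdivrMr // mul1r ltW.
have := small_step _ t01; rewrite divfK ?gt_eqF // => /(_ (lexx _)).
rewrite mulrAC ler_pdivrMr // expr2 -mulrA ler_pM2l //.
have := exprn_gt0 2 delta0; lra.
Qed.

Section PointGeometry.
Variables (R : realType) (d : nat).
Implicit Types (p q x z : pt R d) (t : R).

Let scaleRE (r s : R) : r *: s = r * s. Proof. by []. Qed.

Definition dot p q : R :=
  \sum_(i < d) p.1.1 ord0 i * q.1.1 ord0 i + p.1.2 * q.1.2 + p.2 * q.2.

Lemma sqnormv_ge0 (z : 'rV[R]_d) : 0 <= sqnormv z.
Proof. by apply: sumr_ge0 => i _; exact: sqr_ge0. Qed.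

Lemma dist2_ge0 p q : 0 <= dist2 p q.
Proof. by rewrite /dist2 !addr_ge0 ?sqr_ge0 ?sqnormv_ge0. Qed.

Lemma sqr_dist p q : dist p q ^+ 2 = dist2 p q.
Proof. by rewrite sqr_sqrtr // dist2_ge0. Qed.

Lemma dist2_convex x p q t :
  dist2 (t *: p + (1 - t) *: x) q
  = dist2 x q - 2 * t * dot (p - x) (q - x) + t ^+ 2 * dist2 p x.
Proof.
rewrite /dist2 /dot /sqnormv /=.
have -> : \sum_(i < d) (t *: p.1.1 + (1 - t) *: x.1.1 - q.1.1) ord0 i ^+ 2
  = \sum_(i < d) (x.1.1 - q.1.1) ord0 i ^+ 2
    - 2 * t * \sum_(i < d) (p.1.1 - x.1.1) ord0 i * (q.1.1 - x.1.1) ord0 i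
    + t ^+ 2 * \sum_(i < d) (p.1.1 - x.1.1) ord0 i ^+ 2.
  rewrite !mulr_sumr -sumrB -big_split /=.
  by apply: eq_bigr => i _; rewrite !mxE; ring.
by rewrite !scaleRE; ring.
Qed.

Lemma dist2_cosine x p q :
  dist2 p q = dist2 x q - 2 * dot (p - x) (q - x) + dist2 p x.
Proof.
have := dist2_convex x p q 1.
by rewrite scale1r subrr scale0r addr0 expr1n mulr1 !mul1r.
Qed.

Lemma Qt_convex (f h : 'rV[R]_d -> R) a b x p t :
  convex_fun f -> convex_fun h -> Qt f h a b x -> Qt f h a b p ->
  0 <= t <= 1 -> Qt f h a b (t *: p + (1 - t) *: x).
Proof.
move=> cf ch [hx fx] [hp fp] /andP[t0 t1]; have t1' : 0 <= 1 - t by rewrite subr_ge0.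
have := cf p.1.1 x.1.1 t t0 t1; have := ch p.1.1 x.1.1 t t0 t1.
have := ler_wpM2l t0 hp; have := ler_wpM2l t1' hx.
have := ler_wpM2l t0 fp; have := ler_wpM2l t1' fx.
rewrite /Qt /= !scaleRE; split; nra.
Qed.

Section Theta.
Variables (f h : 'rV[R]_d -> R) (a b eta v : R) (q : pt R d).

Lemma Theta_in p : Qt f h a b p ->
  Theta f h a b eta v q p = (dist2 p q / (2 * eta) + b * v - eta * b ^+ 2 / 2)%:E.
Proof. by move=> Qp; rewrite /Theta asboolT // add0e. Qed.

Lemma Theta_out p : ~ Qt f h a b p -> Theta f h a b eta v q p = +oo%E.
Proof. by move=> Qp; rewrite /Theta asboolF // addye. Qed.

Lemma dist2_gap_le_Theta_gap x p (e : R) : 0 < eta ->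
  Qt f h a b x -> Qt f h a b p ->
  (Theta f h a b eta v q x - Theta f h a b eta v q p <= e%:E)%E ->
  dist2 x q - dist2 p q <= 2 * eta * e.
Proof.
move=> eta0 Qx Qp; rewrite !Theta_in // -EFinB lee_fin.
have -> : dist2 x q / (2 * eta) + b * v - eta * b ^+ 2 / 2
          - (dist2 p q / (2 * eta) + b * v - eta * b ^+ 2 / 2)
        = (dist2 x q - dist2 p q) / (2 * eta) by field; rewrite gt_eqF.
by rewrite ler_pdivrMr ?mulr_gt0 // mulrC.
Qed.

Lemma P1_le_Theta (delta : R) z p : 0 < eta -> 0 <= delta -> Qt f h a b p ->
  dot (p - z) (q - z) <= delta * dist p z + delta ^+ 2 ->
  ((P1 b eta v delta q z p)%:E <= Theta f h a b eta v q p)%E.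
Proof.
move=> eta0 delta0 Qp c_le; rewrite Theta_in // lee_fin /P1 (dist2_cosine z p q).
rewrite -!sqr_dist -subr_ge0.
set A := dist p z in c_le *; set B := dist z q; set c := dot _ _ in c_le *.
have -> : (B ^+ 2 - 2 * c + A ^+ 2) / (2 * eta) + b * v - eta * b ^+ 2 / 2
    - ((A ^+ 2 + B ^+ 2) / (2 * eta) - delta / eta * (A + B) + b * v
       - b ^+ 2 * eta / 2 - delta ^+ 2 / eta)
  = (delta * A + delta ^+ 2 - c + delta * B) / eta by field; rewrite gt_eqF.
apply: divr_ge0 (ltW eta0).
have := mulr_ge0 delta0 (sqrtr_ge0 _ : 0 <= B); lra.
Qed.

End Theta.

End PointGeometry.

Theorem lemma23 (R : realType) (d : nat) (f h : 'rV[R]_d -> R) (a b eta : R)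
  (y : 'rV[R]_d) (u v : R) (pk1 ptilde : pt R d) :
  convex_fun f -> closed_fun f -> convex_fun h -> closed_fun h ->
  0 < a -> 0 < b -> 0 < eta ->
  let delta := Num.sqrt (2 * eta / (d + 2)%:R) in
  let q : pt R d := (y, u, v - b * eta) in
  Qt f h a b pk1 ->
  let rloc := dist pk1 q in
  let Qloc := [set p | Qt f h a b p /\ dist p q <= 2 * rloc] in
  Qloc ptilde ->
  (forall p, Qloc p ->
     (Theta f h a b eta v q ptilde - Theta f h a b eta v q p <= (1 / (d + 2)%:R)%:E)%E) ->
  forall p : pt R d, ((P1 b eta v delta q ptilde p)%:E <= Theta f h a b eta v q p)%E.
Proof.
move=> cf _ ch _ _ _ eta0 delta q _ rloc Qloc [Qpt near_pt] near_min p.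
have [Qp | /Theta_out ->] := asboolP (Qt f h a b p); last exact: leey.
have radicand_gt0 : 0 < 2 * eta / (d + 2)%:R by rewrite divr_gt0 ?mulr_gt0 // addn2.
have delta2 : delta ^+ 2 = 2 * eta * (1 / (d + 2)%:R).
  by rewrite mul1r sqr_sqrtr // ltW.
have delta0 : 0 < delta by rewrite sqrtr_gt0.
set A := dist p ptilde; set c := dot (p - ptilde) (q - ptilde).
have gain t : 0 <= t <= 1 -> t ^+ 2 * A ^+ 2 <= 2 * t * c ->
    2 * t * c <= t ^+ 2 * A ^+ 2 + delta ^+ 2.
  move=> t01 descent; set p_t := t *: p + (1 - t) *: ptilde.
  have Qt_t : Qt f h a b p_t by exact: Qt_convex.
  have closer : dist2 p_t q <= dist2 ptilde q.
    by rewrite dist2_convex -[dist2 p ptilde]sqr_dist -/A -/c; lra.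
  have Qloc_t : Qloc p_t by split=> //; exact: le_trans (ler_wsqrtr closer) near_pt.
  have := dist2_gap_le_Theta_gap eta0 Qpt Qt_t (near_min _ Qloc_t).
  by rewrite dist2_convex -[dist2 p ptilde]sqr_dist -/A -/c delta2; lra.
apply: P1_le_Theta => //; first exact: ltW.
exact: slope_le_of_bounded_gain (sqrtr_ge0 _ : 0 <= A) delta0 gain.
Qed.
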